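(* Let $\mathfrak p,\mathfrak p'$ be U-matroid polyhedra. Then $\mathfrak p'$ is a sheared polyhedron of $\mathfrak p$ (i.e. $\mathfrak p'\subseteq\mathfrak p$ and every vertex of $\mathfrak p$ is a vertex of $\mathfrak p'$) if and only if $\mathfrak p$ is the Minkowski sum $\mathfrak p'+\mathrm{rec}(\mathfrak p)$, where $\mathrm{rec}(\mathfrak p)=\{\mathbf{y}:\mathbf{x}+\mathbf{y}\in\mathfrak p\ \forall\mathbf{x}\in\mathfrak p\}$ is the recession cone of $\mathfrak p$.
   Context: A U-matroid polyhedron is a polyhedron $\mathfrak p\subset\mathbb{R}^n$ with at least one vertex, all of whose vertices are 0,1-vectors, and each of whose 1-dimensional faces (bounded edges or rays) is parallel to a difference of two standard basis vectors; equivalently, the base polyhedron $\{\mathbf{x}:\mathbf{x}(A)\le\rho(A)\ \forall A\in\mathcal{D},\ \mathbf{x}(E)=\rho(E)\}$ of a U-matroid $(E,\mathcal{D},\rho)$. *)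

From HB Require Import structures.
From mathcomp Require Import all_boot all_order all_algebra.
From mathcomp Require Import reals.
Set Implicit Arguments. Unset Strict Implicit. Unset Printing Implicit Defensive.
Import Order.TTheory GRing.Theory Num.Theory.
Local Open Scope ring_scope.

Section UMatroid.
Variables (R : realType) (n : nat).

Definition vec := 'rV[R]_n.
Definition region := vec -> Prop.

Definition dotv (u v : vec) : R := \sum_(j < n) u 0 j * v 0 j.

Definition evec (i : 'I_n) : vec := \row_(j < n) (if j == i then 1 else 0).

Definition polyhedron (P : region) : Prop :=
  exists (m : nat) (a : 'I_m -> vec) (b : 'I_m -> R),
    forall x, P x <-> (forall k, dotv (a k) x <= b k).

Definition is_face (P F : region) : Prop :=
  (exists x, F x) /\
  exists (c : vec) (d : R),
    (forall y, P y -> dotv c y <= d) /\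
    (forall x, F x <-> (P x /\ dotv c x = d)).

Definition is_vertex (P : region) (v : vec) : Prop :=
  is_face P (fun x => x = v).

Definition one_dim (F : region) : Prop :=
  (exists x y, F x /\ F y /\ x <> y) /\
  exists d : vec, forall x y, F x -> F y -> exists t : R, y - x = t *: d.

Definition parallel_to_ediff (F : region) : Prop :=
  exists i j : 'I_n, i <> j /\
    forall x y, F x -> F y -> exists t : R, y - x = t *: (evec i - evec j).

Definition zero_one_vec (v : vec) : Prop := forall j, v 0 j = 0 \/ v 0 j = 1.

Definition U_matroid_polyhedron (P : region) : Prop :=
  [/\ polyhedron P,
      exists v, is_vertex P v,
      forall v, is_vertex P v -> zero_one_vec v
    & forall F, is_face P F -> one_dim F -> parallel_to_ediff F].

Definition sheared (P P' : region) : Prop :=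
  (forall x, P' x -> P x) /\ (forall v, is_vertex P v -> is_vertex P' v).

Definition rec_cone (P : region) : region :=
  fun y => forall x, P x -> P (x + y).

Definition minkowski_sum (A B : region) : region :=
  fun z => exists x y, A x /\ B y /\ z = x + y.

End UMatroid.

(* If [P = P' + rec P], a vertex [v] of [P] splits as [x + y] with
   [c . y <= 0] for its supporting functional [c], which forces [x = v], so [v]
   is a vertex of [P'].  Conversely, [P' + rec P] is convex, contains the
   vertices of [P] and is stable under adding recession directions, and every
   such set contains the pointed polyhedron [P]: by induction on the number of
   slack constraints, a point [z] that is not a vertex moves along a direction
   of its face until a new constraint becomes tight, either both ways ([z] is
   then a convex combination of the two endpoints) or one way only (the
   opposite direction is then a recession direction). *)

From HB Require Import structures.
From mathcomp Require Import all_boot all_order all_algebra.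
From mathcomp Require Import reals.
From mathcomp Require Import ring lra.
From Stdlib Require Import Classical.
Set Implicit Arguments. Unset Strict Implicit. Unset Printing Implicit Defensive.
Import Order.TTheory GRing.Theory Num.Theory.
Local Open Scope ring_scope.

Section Polyhedra.
Variables (R : realType) (n : nat).
Local Notation vec := (vec R n).
Local Notation region := (region R n).
Local Notation dotv := (@dotv R n).

Lemma dotvDr (u x y : vec) : dotv u (x + y) = dotv u x + dotv u y.
Proof. by rewrite /dotv -big_split; apply: eq_bigr => j _; rewrite mxE mulrDr. Qed.

Lemma dotvZr (u : vec) t (x : vec) : dotv u (t *: x) = t * dotv u x.
Proof. by rewrite /dotv mulr_sumr; apply: eq_bigr => j _; rewrite mxE mulrCA. Qed.

Lemma dotvNr (u x : vec) : dotv u (- x) = - dotv u x.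
Proof. by rewrite -scaleN1r dotvZr mulN1r. Qed.

Lemma dotvBr (u x y : vec) : dotv u (x - y) = dotv u x - dotv u y.
Proof. by rewrite dotvDr dotvNr. Qed.

Lemma dotv_suml (I : finType) (Q : pred I) (F : I -> vec) (y : vec) :
  dotv (\sum_(i | Q i) F i) y = \sum_(i | Q i) dotv (F i) y.
Proof.
by rewrite /dotv exchange_big; apply: eq_bigr => j _; rewrite summxE mulr_suml.
Qed.

Definition convex (A : region) : Prop :=
  forall x y l, A x -> A y -> 0 <= l <= 1 -> A (l *: x + (1 - l) *: y).

Lemma polyhedron_convex (P : region) : polyhedron P -> convex P.
Proof.
case=> m [a [b HP]] x y l /HP Px /HP Py /andP[l0 l1]; apply/HP => k.
rewrite dotvDr !dotvZr.
have := Px k; have := Py k => hy hx.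
have : l * dotv (a k) x <= l * b k by rewrite ler_wpM2l.
have : (1 - l) * dotv (a k) y <= (1 - l) * b k by rewrite ler_wpM2l // subr_ge0.
lra.
Qed.

Lemma rec_cone0 (P : region) : rec_cone P 0.
Proof. by move=> x Px; rewrite addr0. Qed.

Lemma rec_coneD (P : region) y1 y2 :
  rec_cone P y1 -> rec_cone P y2 -> rec_cone P (y1 + y2).
Proof. by move=> r1 r2 x Px; rewrite addrA; apply/r2/r1. Qed.

Lemma rec_cone_convex (P : region) : convex P -> convex (rec_cone P).
Proof.
move=> cP y1 y2 l r1 r2 l01 x Px.
have -> : x + (l *: y1 + (1 - l) *: y2) = l *: (x + y1) + (1 - l) *: (x + y2).
  by rewrite !scalerDr addrACA -scalerDl subrKC scale1r.
exact: cP (r1 x Px) (r2 x Px) l01.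
Qed.

Lemma minkowski_sum_convex (A B : region) :
  convex A -> convex B -> convex (minkowski_sum A B).
Proof.
move=> cA cB _ _ l [x1 [y1 [A1 [B1 ->]]]] [x2 [y2 [A2 [B2 ->]]]] l01.
exists (l *: x1 + (1 - l) *: x2), (l *: y1 + (1 - l) *: y2).
by split; [exact: cA|split; [exact: cB|rewrite !scalerDr addrACA]].
Qed.

Lemma vertex_mem (P : region) v : is_vertex P v -> P v.
Proof. by case=> _ [c [e [_ /(_ v) [/(_ erefl) []]]]]. Qed.

Lemma vertex_extreme (P : region) v d :
  is_vertex P v -> P (v + d) -> P (v - d) -> d = 0.
Proof.
case=> _ [c [e [Hle Hv]]] Pvd Pvmd.
have [Pv cv] := proj1 (Hv v) erefl.
have := Hle _ Pvd; have := Hle _ Pvmd; rewrite dotvBr dotvDr => h2 h1.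
have /Hv vd : P (v + d) /\ dotv c (v + d) = e by split => //; rewrite dotvDr; lra.
by rewrite -(addKr v d) vd addNr.
Qed.

Lemma is_vertex_subset (P P' : region) v :
  (forall x, P' x -> P x) -> P' v -> is_vertex P v -> is_vertex P' v.
Proof.
move=> sub P'v [_ [c [e [Hle Hv]]]]; split; first by exists v.
exists c, e; split=> [y /sub|x]; first exact: Hle.
split=> [->|[/sub Px cx]]; last exact/Hv.
by split=> //; case: (proj1 (Hv v) erefl).
Qed.

Lemma vertex_minkowski_rec (P P' : region) v :
  (forall x, P' x -> P x) -> is_vertex P v ->
  minkowski_sum P' (rec_cone P) v -> P' v.
Proof.
move=> sub [_ [c [e [Hle Hv]]]] [x [y [P'x [ry ev]]]].
have [Pv cv] := proj1 (Hv v) erefl.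
have := Hle _ (ry v Pv); have := Hle _ (sub _ P'x).
rewrite ev !dotvDr in cv; move=> hx; rewrite {1}ev !dotvDr => hy.
have /Hv xv : P x /\ dotv c x = e by split; [exact: sub | lra].
by rewrite -xv.
Qed.

Lemma convex_mem_between (A : region) (z d : vec) (t1 t2 : R) :
  convex A -> 0 < t1 -> 0 < t2 ->
  A (z + t1 *: d) -> A (z - t2 *: d) -> A z.
Proof.
move=> cA t1_gt0 t2_gt0 A1 A2; pose l := t2 / (t1 + t2).
have t12_gt0 : 0 < t1 + t2 by rewrite addr_gt0.
have l01 : 0 <= l <= 1.
  by rewrite divr_ge0 ?ler_pdivrMr ?mul1r ?lerDr // ltW.
have -> : z = l *: (z + t1 *: d) + (1 - l) *: (z - t2 *: d).
  apply/rowP => j; rewrite !mxE /l; field; lra.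
exact: cA.
Qed.

Section Inequalities.
Variables (m : nat) (a : 'I_m -> vec) (b : 'I_m -> R) (P : region).
Hypothesis HP : forall x, P x <-> (forall k, dotv (a k) x <= b k).

Definition nslack (x : vec) : nat := #|[pred k | dotv (a k) x != b k]|.

Definition face_direction (z d : vec) : Prop :=
  forall k, dotv (a k) z = b k -> dotv (a k) d = 0.

Lemma face_directionN z d : face_direction z d -> face_direction z (- d).
Proof. by move=> fd k /fd; rewrite dotvNr => ->; rewrite oppr0. Qed.

Lemma rec_cone_of_nonpos d : (forall k, dotv (a k) d <= 0) -> rec_cone P d.
Proof.
move=> d_le0 x /HP Px; apply/HP => k.
by rewrite dotvDr; have := Px k; have := d_le0 k; lra.
Qed.

(* The sum of the constraints tight at [z] is maximized exactly on the face
   of [z]; when that face has no direction it is [{z}]. *)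
Lemma vertex_of_no_face_direction z :
  P z -> (forall d, face_direction z d -> d = 0) -> is_vertex P z.
Proof.
move=> Pz nod; split; first by exists z.
exists (\sum_(k | dotv (a k) z == b k) a k), (\sum_(k | dotv (a k) z == b k) b k).
split=> [y /HP Py|x]; first by rewrite dotv_suml; apply: ler_sum => k _.
split=> [->|[/HP Px]].
  by split=> //; rewrite dotv_suml; apply: eq_bigr => k /eqP.
rewrite dotv_suml => /eqP; rewrite eq_sym -subr_eq0 -sumrB => /eqP.
move=> /psumr_eq0P tight.
have {}tight k : dotv (a k) z == b k -> b k - dotv (a k) x = 0.
  by apply: tight => i _; rewrite subr_ge0.
apply/eqP; rewrite -subr_eq0; apply/eqP/nod => k zk.
by rewrite dotvBr zk; apply/eqP; rewrite subr_eq0 eq_sym -subr_eq0 tight ?zk.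
Qed.

(* The step is the least ratio [(b k - a k . z) / (a k . d)] over the
   constraints [k] increasing along [d]. *)
Lemma move_to_boundary z d :
  P z -> face_direction z d -> (exists k, 0 < dotv (a k) d) ->
  exists t : R,
    [/\ 0 < t, P (z + t *: d) & (nslack (z + t *: d)%R < nslack z)%N].
Proof.
move=> /HP Pz fd [k0 k0_pos].
pose r k := (b k - dotv (a k) z) / dotv (a k) d.
have [k1 k1_pos r_min] := @arg_minP _ _ _ k0 (fun k => 0 < dotv (a k) d) r k0_pos.
have r_mul k : 0 < dotv (a k) d -> r k * dotv (a k) d = b k - dotv (a k) z.
  by move=> k_pos; rewrite /r divfK // gt_eqF.
have k1_slack : dotv (a k1) z != b k1.
  by apply/eqP => /fd k1_orth; rewrite k1_orth ltxx in k1_pos.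
have r1_pos : 0 < r k1.
  by rewrite divr_gt0 // subr_gt0 lt_neqAle k1_slack Pz.
exists (r k1); split=> //.
  apply/HP => k; rewrite dotvDr dotvZr.
  have [k_pos|] := ltP 0 (dotv (a k) d).
    have := r_mul k k_pos; have : r k1 * dotv (a k) d <= r k * dotv (a k) d.
      by rewrite ler_wpM2r ?r_min // ltW.
    lra.
  by move=> k_le0; have := Pz k; have := mulr_ge0_le0 (ltW r1_pos) k_le0; lra.
apply: proper_card; apply/properP; split.
  apply/subsetP => k; rewrite !inE; apply: contra => /eqP zk.
  by rewrite dotvDr dotvZr fd // mulr0 addr0 zk.
by exists k1; rewrite !inE // negbK dotvDr dotvZr r_mul // addrC subrK.
Qed.

Lemma exists_ascending_face_direction z d :
  (exists v, is_vertex P v) -> face_direction z d -> d != 0 ->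
  exists2 d', face_direction z d' & exists k, 0 < dotv (a k) d'.
Proof.
move=> [v Hv] fd d_neq0.
have [k dk_neq0] : exists k, dotv (a k) d != 0.
  apply: NNPP => /not_ex_all_not d_orth; move/eqP: d_neq0; apply.
  have {}d_orth k : dotv (a k) d = 0 by apply/eqP/negPn/negP; exact: d_orth.
  have /HP Pv := vertex_mem Hv.
  apply: vertex_extreme Hv _ _; apply/HP => k;
    by rewrite ?dotvBr ?dotvDr d_orth ?addr0 ?subr0.
have [dk_neg|dk_pos|dk0] := ltgtP (dotv (a k) d) 0.
- by exists (- d); [exact: face_directionN | exists k; rewrite dotvNr oppr_gt0].
- by exists d => //; exists k.
- by rewrite dk0 eqxx in dk_neq0.
Qed.

Lemma subset_of_vertices_rec (Q : region) :
  (exists v, is_vertex P v) -> convex Q -> (forall v, is_vertex P v -> Q v) ->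
  (forall x y, Q x -> rec_cone P y -> Q (x + y)) ->
  forall z, P z -> Q z.
Proof.
move=> pointed cQ vQ recQ z.
have [N] := ubnP (nslack z); elim: N z => // N IH z lt_zN Pz.
have boundQ d : face_direction z d -> (exists k, 0 < dotv (a k) d) ->
    exists2 t : R, 0 < t & Q (z + t *: d).
  move=> fd d_asc; have [t [t_gt0 Pzt lt]] := move_to_boundary Pz fd d_asc.
  by exists t => //; apply: IH Pzt; exact: leq_trans lt lt_zN.
have [[d0 d0_neq0 fd0]|nod] := classic (exists2 d, d != 0 & face_direction z d).
  have [d fd [k dk_pos]] := exists_ascending_face_direction pointed fd0 d0_neq0.
  have [t1 t1_gt0 Q1] := boundQ d fd (ex_intro _ k dk_pos).
  have [[k' dk'_pos]|/not_ex_all_not dN_le0] :=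
    classic (exists k, 0 < dotv (a k) (- d)).
    have [t2 t2_gt0] := boundQ _ (face_directionN fd) (ex_intro _ k' dk'_pos).
    by rewrite scalerN => Q2; exact: convex_mem_between cQ t1_gt0 t2_gt0 Q1 Q2.
  rewrite -(addrK (t1 *: d) z); apply: recQ Q1 _.
  apply: rec_cone_of_nonpos => k'.
  rewrite -scalerN dotvZr pmulr_rle0 // leNgt; exact/negP/dN_le0.
apply/vQ/vertex_of_no_face_direction => // d fd.
by apply/eqP; apply: contraT => d_neq0; case: nod; exists d.
Qed.

End Inequalities.

Lemma pointed_polyhedron_subset (P Q : region) :
  polyhedron P -> (exists v, is_vertex P v) -> convex Q ->
  (forall v, is_vertex P v -> Q v) ->
  (forall x y, Q x -> rec_cone P y -> Q (x + y)) ->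
  forall z, P z -> Q z.
Proof.
case=> m [a [b HP]] pointed cQ vQ recQ z Pz.
exact: (subset_of_vertices_rec HP pointed cQ vQ recQ Pz).
Qed.

Lemma mem_minkowski_rec (A P : region) x :
  A x -> minkowski_sum A (rec_cone P) x.
Proof. by exists x, 0; rewrite addr0; split=> //; split=> //; exact: rec_cone0. Qed.

Lemma minkowski_recD (A P : region) x y :
  minkowski_sum A (rec_cone P) x -> rec_cone P y ->
  minkowski_sum A (rec_cone P) (x + y).
Proof.
move=> [x' [y' [Ax' [ry' ->]]]] ry; exists x', (y' + y).
by rewrite addrA; split=> //; split=> //; exact: rec_coneD.
Qed.

End Polyhedra.

Theorem proposition4p6 (R : realType) (n : nat) (P P' : region R n) :
  U_matroid_polyhedron P -> U_matroid_polyhedron P' ->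
  (sheared P P' <->
   (forall z, P z <-> minkowski_sum P' (rec_cone P) z)).
Proof.
move=> [polyP pointed _ _] [polyP' _ _ _]; split.
  case=> sub vert z; split.
    apply: (pointed_polyhedron_subset polyP pointed) z.
    - exact: minkowski_sum_convex (polyhedron_convex polyP')
        (rec_cone_convex (polyhedron_convex polyP)).
    - by move=> v /vert /vertex_mem; exact: mem_minkowski_rec.
    - exact: minkowski_recD.
  by case=> x [y [P'x [ry ->]]]; exact/ry/sub.
move=> PE; have sub x : P' x -> P x by move=> P'x; apply/PE/mem_minkowski_rec.
split=> // v Hv; apply: (is_vertex_subset sub _ Hv).
exact: vertex_minkowski_rec sub Hv (proj1 (PE v) (vertex_mem Hv)).
Qed.
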